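(* It is undecidable whether, for an arbitrary ranked alphabet $\Sigma$, computable strong bimonoid $B$, and bottom-up deterministic $(\Sigma,B)$-wta $\mathcal{A}$, the wta $\mathcal{A}$ has the finite order property.
   Context: Ranked alphabet $\Sigma$ ($\Sigma^{(0)}\ne\emptyset$). Strong bimonoid $(B,\oplus,\otimes,\mathbb{0},\mathbb{1})$: commutative monoid $(B,\oplus,\mathbb{0})$, monoid $(B,\otimes,\mathbb{1})$, $\mathbb{0}\ne\mathbb{1}$, $\mathbb{0}$ absorbing; computable if $B$ is recursive and $\oplus,\otimes$ computable. For $b\in B$, $nb$ is the $n$-fold sum; $b$ has finite order in $(B,\oplus,\mathbb{0})$ if $\{nb\mid n\in\mathbb{N}\}$ is finite. $(\Sigma,B)$-wta $\mathcal{A}=(Q,\delta,F)$: $Q$ finite nonempty, $\delta_k:Q^k\times\Sigma^{(k)}\times Q\to B$, $F:Q\to B$; bottom-up deterministic if for all $k,\sigma,q_1,\dots,q_k$ at most one $q$ has $\delta_k(q_1\dots q_k,\sigma,q)\ne\mathbb{0}$. $H_{\mathcal{A}}$ is the smallest subset of $B$ containing $\bigcup_k\mathrm{im}(\delta_k)$ and closed under $\otimes$. $\mathcal{A}$ has the finite order property if $H_{\mathcal{A}}$ is finite and every element of $\{a\otimes c\mid a\in H_{\mathcal{A}},c\in\mathrm{im}(F)\}$ has finite order in $(B,\oplus,\mathbb{0})$. *)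

From mathcomp Require Import all_boot.

Set Implicit Arguments.
Unset Strict Implicit.
Unset Printing Implicit Defensive.

(*    Programs are generic trees (a countType, so they can themselves  *)
(*    be given as input, via the injective encoding [pickle]).         *)
(*    Any other tree diverges everywhere.                              *)

Definition program := GenTree.tree nat.

Inductive eval : program -> seq nat -> nat -> Prop :=
| ev_zero v : eval (GenTree.Node 0 [::]) v 0
| ev_succ v : eval (GenTree.Node 1 [::]) v (head 0 v).+1
| ev_proj i v : eval (GenTree.Node 2 [:: GenTree.Leaf i]) v (nth 0 v i)
| ev_comp f gs v ws y :
    evals gs v ws -> eval f ws y -> eval (GenTree.Node 3 (f :: gs)) v y
| ev_rec0 f g v y :
    eval f v y -> eval (GenTree.Node 4 [:: f; g]) (0 :: v) y
| ev_recS f g n v z y :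
    eval (GenTree.Node 4 [:: f; g]) (n :: v) z ->
    eval g [:: n, z & v] y ->
    eval (GenTree.Node 4 [:: f; g]) (n.+1 :: v) y
| ev_mu f v n :
    eval f (n :: v) 0 ->
    (forall m, m < n -> exists k, eval f (m :: v) k.+1) ->
    eval (GenTree.Node 5 [:: f]) v n
with evals : seq program -> seq nat -> seq nat -> Prop :=
| evs_nil v : evals [::] v [::]
| evs_cons g gs v w ws :
    eval g v w -> evals gs v ws -> evals (g :: gs) v (w :: ws).

(*   An instance consists of                                           *)
(*   - ranks : seq nat  -- the ranked alphabet {0,...,size ranks - 1}, *)
(*                         symbol s having rank (nth 0 ranks s);       *)
(*   - (cB, cplus, ctimes) -- programs: characteristic function of the *)
(*                         carrier B (a subset of nat), and the binary *)
(*                         operations (+) and (x);                     *)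
(*   - trans            -- the transition weights, a list of entries   *)
(*                         (sigma, [q1..qk], q, weight); delta at      *)
(*                         (q1..qk, sigma, q) is the weight of the     *)
(*                         first matching entry, and `zero' if none;   *)

Definition instance : Type :=
  (seq nat * nat * (program * program * program) * (nat * nat)
   * seq (nat * seq nat * nat * nat) * seq nat)%type.

Section Instance.
Variable I : instance.

Definition i_ranks : seq nat := I.1.1.1.1.1.
Definition i_nQ : nat := I.1.1.1.1.2.
Definition i_cB : program := I.1.1.1.2.1.1.
Definition i_cplus : program := I.1.1.1.2.1.2.
Definition i_ctimes : program := I.1.1.1.2.2.
Definition i_zero : nat := I.1.1.2.1.
Definition i_one : nat := I.1.1.2.2.
Definition i_trans : seq (nat * seq nat * nat * nat) := I.1.2.
Definition i_fin : seq nat := I.2.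

Definition is_sym (s : nat) : bool := s < size i_ranks.
Definition rank (s : nat) : nat := nth 0 i_ranks s.

Definition is_state (q : nat) : bool := q < i_nQ.

Definition inB (x : nat) : Prop := eval i_cB [:: x] 1.

Definition good_args (s : nat) (qs : seq nat) : bool :=
  [&& is_sym s, size qs == rank s & all is_state qs].

Definition delta (s : nat) (qs : seq nat) (q : nat) : nat :=
  let m := [seq e <- i_trans | (e.1.1.1 == s) && (e.1.1.2 == qs) && (e.1.2 == q)] in
  match m with
  | e :: _ => e.2
  | [::] => i_zero
  end.

Definition F (q : nat) : nat := nth i_zero i_fin q.

End Instance.

Definition decides_set (c : program) : Prop :=
  forall x, eval c [:: x] 0 \/ eval c [:: x] 1.

Definition computes2 (c : program) (P : nat -> Prop) (f : nat -> nat -> nat) :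
  Prop := forall x y, P x -> P y -> eval c [:: x; y] (f x y).

Definition strong_bimonoid (P : nat -> Prop) (add mul : nat -> nat -> nat)
  (z o : nat) : Prop :=
  [/\ P z, P o,
      (forall x y, P x -> P y -> P (add x y)) &
      (forall x y, P x -> P y -> P (mul x y))] /\
  [/\ (forall x y w, P x -> P y -> P w -> add (add x y) w = add x (add y w)),
      (forall x y, P x -> P y -> add x y = add y x) &
      (forall x, P x -> add z x = x /\ add x z = x)] /\
  [/\ (forall x y w, P x -> P y -> P w -> mul (mul x y) w = mul x (mul y w)),
      (forall x, P x -> mul o x = x /\ mul x o = x),
      z <> o &
      (forall x, P x -> mul z x = z /\ mul x z = z)].

Definition wf_wta (I : instance) : Prop :=
  0 < i_nQ I /\
  (forall e, e \in i_trans I ->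
     [/\ good_args I e.1.1.1 e.1.1.2, is_state I e.1.2 & inB I e.2]) /\
  size (i_fin I) = i_nQ I /\
  (forall q, is_state I q -> inB I (F I q)).

Definition bu_deterministic (I : instance) : Prop :=
  forall s qs, good_args I s qs ->
  forall q q', is_state I q -> is_state I q' ->
    delta I s qs q <> i_zero I -> delta I s qs q' <> i_zero I -> q = q'.

Definition valid_instance (I : instance) : Prop :=
  [/\ 0 \in i_ranks I,                       (* Sigma^(0) nonempty *)
      decides_set (i_cB I),
      (exists add mul,
         [/\ computes2 (i_cplus I) (inB I) add,
             computes2 (i_ctimes I) (inB I) mul &
             strong_bimonoid (inB I) add mul (i_zero I) (i_one I)]),
      wf_wta I &
      bu_deterministic I].

Definition finite_set (P : nat -> Prop) : Prop :=
  exists s : seq nat, forall x, P x -> x \in s.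

Definition in_im_delta (I : instance) (b : nat) : Prop :=
  exists s qs q, [/\ good_args I s qs, is_state I q & b = delta I s qs q].

Inductive inH (I : instance) (mul : nat -> nat -> nat) : nat -> Prop :=
| inH_base b : in_im_delta I b -> inH I mul b
| inH_mul a b : inH I mul a -> inH I mul b -> inH I mul (mul a b).

Fixpoint nsum (add : nat -> nat -> nat) (z : nat) (n : nat) (b : nat) : nat :=
  match n with
  | 0 => z
  | n'.+1 => add (nsum add z n' b) b
  end.

Definition finite_order (add : nat -> nat -> nat) (z b : nat) : Prop :=
  finite_set (fun x => exists n, x = nsum add z n b).

Definition fop_wrt (I : instance) (add mul : nat -> nat -> nat) : Prop :=
  finite_set (inH I mul) /\
  (forall a c, inH I mul a -> (exists q, is_state I q /\ c = F I q) ->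
     finite_order add (i_zero I) (mul a c)).

(* the operations of B are those computed by cplus / ctimes
   (they are uniquely determined on B, eval being deterministic) *)
Definition has_fop (I : instance) : Prop :=
  forall add mul,
    computes2 (i_cplus I) (inB I) add ->
    computes2 (i_ctimes I) (inB I) mul ->
    fop_wrt I add mul.

(* Suppose a program [d] decided the finite order property. Uniformly in [d]
   we build a deterministic wta with one state and one constant whose root
   weight [e] lives in a strong bimonoid where adding copies of [e] increments
   a counter that saturates at the least [j] such that [d], run with fuel [j]
   on the code of this very wta, rejects it. The addition is computable since
   it runs [d] with bounded fuel only, and associative since saturating at the
   least such [j] is idempotent. So the wta has the finite order property iff
   [d] rejects it, and [d] errs on it. A wta cannot contain its own code, so
   each counter is tagged with the code [m] of the rest of the wta, from which
   the code of the whole wta is computable. *)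

From mathcomp Require Import all_boot.
From Stdlib Require List.

Set Implicit Arguments.
Unset Strict Implicit.
Unset Printing Implicit Defensive.

Notation Node := GenTree.Node.
Notation Leaf := GenTree.Leaf.

Definition program_nested_ind (P : program -> Prop)
    (P_leaf : forall x, P (Leaf x))
    (P_node : forall n l, (forall t, List.In t l -> P t) -> P (Node n l)) :
    forall t, P t :=
  fix F t := match t with
  | Leaf x => P_leaf x
  | Node n l => P_node n l ((fix G l : forall t, List.In t l -> P t :=
        match l with
        | [::] => fun t H => False_ind _ H
        | t0 :: l' => fun t H => match H with
                                  | or_introl E => eq_ind t0 P (F t0) t E
                                  | or_intror H' => G l' t H'
                                  end
        end) l)
  end.

(** * A step-bounded evaluator *)

Fixpoint omap_all T U (h : T -> option U) (s : seq T) : option (seq U) :=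
  match s with
  | [::] => Some [::]
  | x :: s' => match h x, omap_all h s' with
               | Some y, Some ys => Some (y :: ys)
               | _, _ => None
               end
  end.

Lemma omap_all_sub T U (h h' : T -> option U) s ys :
    (forall x y, List.In x s -> h x = Some y -> h' x = Some y) ->
  omap_all h s = Some ys -> omap_all h' s = Some ys.
Proof.
elim: s ys => [|x s IHs] ys //= hh'.
case hx: (h x) => [y|] //; case hs: (omap_all h s) => [ys'|] // [<-].
rewrite (hh' x y (or_introl erefl) hx) (IHs ys') // => x' y' x's.
exact: hh' (or_intror x's).
Qed.

Definition orec (F G : seq nat -> option nat) (v : seq nat) :=
  fix rec n := match n with
  | 0 => F v
  | n'.+1 => if rec n' is Some z then G [:: n', z & v] else None
  end.

(* [mu_search F v j] is [0] while [F (m :: v)] is positive for all [m < j],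
   becomes [1] at the first divergence and [s.+2] at the least zero [s]. *)
Definition mu_search (F : seq nat -> option nat) (v : seq nat) :=
  fix search j := match j with
  | 0 => 0
  | j'.+1 => let s := search j' in
      if s != 0 then s else
      match F (j' :: v) with None => 1 | Some 0 => j'.+2 | Some _ => 0 end
  end.

(* Only the unbounded searches of minimisations consume the fuel [k]. *)
Fixpoint ceval (k : nat) (p : program) (v : seq nat) {struct p} : option nat :=
  match p with
  | Node 0 [::] => Some 0
  | Node 1 [::] => Some (head 0 v).+1
  | Node 2 [:: Leaf i] => Some (nth 0 v i)
  | Node 3 (f :: gs) =>
      if omap_all (fun g => ceval k g v) gs is Some ws then ceval k f ws else None
  | Node 4 [:: f; g] =>
      if v is n :: v' then orec (ceval k f) (ceval k g) v' n else None
  | Node 5 [:: f] =>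
      if mu_search (ceval k f) v k is s.+2 then Some s else None
  | _ => None
  end.

Section MuSearch.
Variables (F : seq nat -> option nat) (v : seq nat).

Lemma mu_searchS j : mu_search F v j.+1 =
  if mu_search F v j != 0 then mu_search F v j else
  match F (j :: v) with None => 1 | Some 0 => j.+2 | Some _ => 0 end.
Proof. by []. Qed.

Lemma mu_search_eq0 j : mu_search F v j = 0 ->
  forall m, m < j -> exists w, F (m :: v) = Some w.+1.
Proof.
elim: j => [//|j IHj]; rewrite mu_searchS.
have [s0|s_neq0] := eqVneq (mu_search F v j) 0; last first.
  by move=> /= /eqP; rewrite (negPf s_neq0).
rewrite s0 /=; case Fj: (F (j :: v)) => [[|w]|] //= _ m.
by rewrite ltnS leq_eqVlt => /predU1P[->|/IHj]; [exists w | apply].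
Qed.

Lemma mu_search_found j s : mu_search F v j = s.+2 ->
  [/\ s < j, F (s :: v) = Some 0 &
      forall m, m < s -> exists w, F (m :: v) = Some w.+1].
Proof.
elim: j => [//|j IHj]; rewrite mu_searchS.
have [s0|s_neq0] := eqVneq (mu_search F v j) 0.
  rewrite s0 /=; case Fj: (F (j :: v)) => [[|w]|] //= [<-].
  by split=> //; apply: mu_search_eq0.
by move=> /= /IHj[lt_sj Fs Fm]; split=> //; apply: ltnW.
Qed.

Lemma mu_search_least s : F (s :: v) = Some 0 ->
    (forall m, m < s -> exists w, F (m :: v) = Some w.+1) ->
  forall j, s < j -> mu_search F v j = s.+2.
Proof.
move=> Fs Fm.
have s0 j : j <= s -> mu_search F v j = 0.
  elim: j => [//|j IHj] le_js; rewrite mu_searchS IHj ?(ltnW le_js) //=.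
  by have [w ->] := Fm j le_js.
elim=> [//|j IHj]; rewrite ltnS leq_eqVlt => /predU1P[<-|lt_sj].
  by rewrite mu_searchS s0 //= Fs.
by rewrite mu_searchS IHj.
Qed.

End MuSearch.

Lemma ceval_mono p k k' v y :
  k <= k' -> ceval k p v = Some y -> ceval k' p v = Some y.
Proof.
elim/program_nested_ind: p v y => [x|n l IH] v y le_kk' //.
case: n l IH => [|[|[|[|[|[|n]]]]]] [|f gs] IH //=.
- have IHf := IH f (or_introl erefl).
  case ws_def: (omap_all _ gs) => [ws|] // /(IHf _ _ le_kk').
  rewrite (omap_all_sub _ ws_def) // => g w gs_g.
  exact: IH (or_intror gs_g) _ _ le_kk'.
- case: gs IH => [|g [|//]] IH //; case: v => [//|n v'].
  elim: n y => [|n IHn] y /=; first exact: IH (or_introl erefl) _ _ le_kk'.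
  case: (orec _ _ v' n) (IHn) => [z|//] /(_ z erefl) ->.
  exact: IH (or_intror (or_introl erefl)) _ _ le_kk'.
- case: gs IH => [|//] IH; have IHf := IH f (or_introl erefl).
  case found: (mu_search _ v k) => [|[|s]] // [<-].
  have [lt_sk Fs Fm] := mu_search_found found.
  rewrite (@mu_search_least _ _ s) ?(leq_trans lt_sk le_kk') //; first exact: IHf Fs.
  by move=> m /Fm[w Fmw]; exists w; apply: IHf Fmw.
Qed.

Lemma ceval_maxl k k' p v y :
  ceval k p v = Some y -> ceval (maxn k k') p v = Some y.
Proof. by apply: ceval_mono; rewrite leq_maxl. Qed.

Lemma ceval_maxr k k' p v y :
  ceval k' p v = Some y -> ceval (maxn k k') p v = Some y.
Proof. by apply: ceval_mono; rewrite leq_maxr. Qed.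

Lemma omap_all_evals k gs v ws :
    (forall g w, List.In g gs -> ceval k g v = Some w -> eval g v w) ->
  omap_all (fun g => ceval k g v) gs = Some ws -> evals gs v ws.
Proof.
elim: gs ws => [|g gs IHgs] ws IH /=; first by case=> <-; constructor.
case g_w: (ceval k g v) => [w|//]; case gs_ws: (omap_all _ gs) => [ws'|//] [<-].
constructor; first exact: IH g w (or_introl erefl) g_w.
by apply: IHgs gs_ws => g' w' gs_g'; apply: IH (or_intror gs_g').
Qed.

Lemma ceval_sound k p v y : ceval k p v = Some y -> eval p v y.
Proof.
elim/program_nested_ind: p v y => [x|n l IH] v y //.
case: n l IH => [|[|[|[|[|[|n]]]]]] [|f gs] IH //=.
- by move=> [<-]; constructor.
- by move=> [<-]; constructor.
- by case: f gs {IH} => [i|//] [|//] [<-]; constructor.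
- case ws_def: (omap_all _ gs) => [ws|] // /(IH f (or_introl erefl)).
  apply: ev_comp; apply: omap_all_evals ws_def => g w gs_g.
  exact: IH g (or_intror gs_g) _ _.
- case: gs IH => [|g [|//]] IH //; case: v => [//|n v'].
  elim: n y => [|n IHn] y /=; first by move/(IH f (or_introl erefl)); constructor.
  case: (orec _ _ v' n) (IHn) => [z|//] /(_ z erefl) rec_n.
  by move/(IH g (or_intror (or_introl erefl))); apply: ev_recS.
- case: gs IH => [|//] IH; have IHf := IH f (or_introl erefl).
  case found: (mu_search _ v k) => [|[|s]] // [<-].
  have [_ /IHf Fs Fm] := mu_search_found found.
  by constructor=> // m /Fm[w /IHf]; exists w.
Qed.

Lemma evals_ceval gs v ws :
    (forall g w, List.In g gs -> eval g v w -> exists k, ceval k g v = Some w) ->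
  evals gs v ws -> exists k, omap_all (fun g => ceval k g v) gs = Some ws.
Proof.
move=> IH gs_ws; elim: gs_ws IH => {gs v ws} [v|g gs v w ws g_w _ IHgs] IH.
  by exists 0.
have [k1 g_k1] := IH g w (or_introl erefl) g_w.
have [k2 gs_k2] := IHgs (fun g' w' gs_g' => IH g' w' (or_intror gs_g')).
exists (maxn k1 k2); rewrite /= (ceval_maxl _ g_k1).
by rewrite (omap_all_sub _ gs_k2) // => g' w' _ /ceval_maxr->.
Qed.

Lemma ceval_complete_comp f gs v y :
    (forall h, List.In h (f :: gs) ->
       forall v y, eval h v y -> exists k, ceval k h v = Some y) ->
  eval (Node 3 (f :: gs)) v y -> exists k, ceval k (Node 3 (f :: gs)) v = Some y.
Proof.
move=> IH; move Ecomp: (Node 3 (f :: gs)) => p ev; elim: ev Ecomp => // {p v y}.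
move=> f' gs' v ws y gs'_ws f'_y _ [Ef Egs]; subst f' gs'.
have [k1 gs_k1] := evals_ceval (fun h w gs_h => IH h (or_intror gs_h) v w) gs'_ws.
have [k2 f_k2] := IH f (or_introl erefl) _ _ f'_y.
exists (maxn k1 k2) => /=; rewrite (omap_all_sub _ gs_k1) ?(ceval_maxr _ f_k2) //.
by move=> h w _ /ceval_maxl->.
Qed.

Section CevalComplete.
Variables f g : program.
Hypothesis f_complete : forall v y, eval f v y -> exists k, ceval k f v = Some y.
Hypothesis g_complete : forall v y, eval g v y -> exists k, ceval k g v = Some y.

Lemma ceval_complete_rec v y :
  eval (Node 4 [:: f; g]) v y -> exists k, ceval k (Node 4 [:: f; g]) v = Some y.
Proof.
move Erec: (Node 4 [:: f; g]) => p ev; elim: ev Erec => // {p v y}.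
  move=> f' g' v y f'_y _ [Ef _]; subst f'.
  by have [k f_k] := f_complete f'_y; exists k.
move=> f' g' n v z y _ IHrec g'_y _ [Ef Eg]; subst f' g'.
have [k1 rec_k1] := IHrec erefl; have [k2 g_k2] := g_complete g'_y.
exists (maxn k1 k2); move: (ceval_maxl k2 rec_k1) => /= ->.
exact: ceval_maxr.
Qed.

Lemma ceval_complete_mu v y :
  eval (Node 5 [:: f]) v y -> exists k, ceval k (Node 5 [:: f]) v = Some y.
Proof.
move Emu: (Node 5 [:: f]) => p ev; elim: ev Emu => // {p v y}.
move=> f' v n f'_0 _ f'_pos [Ef]; subst f'.
have [k0 f_k0] := f_complete f'_0.
have [k1 f_k1] : exists k, forall m, m < n -> exists w, ceval k f (m :: v) = Some w.+1.
  elim: n {f'_0 f_k0} f'_pos => [|n IHn] f'_pos; first by exists 0.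
  have [k1 f_k1] := IHn (fun m lt_mn => f'_pos m (ltnW lt_mn)).
  have [w /f_complete[k2 f_k2]] := f'_pos n (ltnSn n).
  exists (maxn k1 k2) => m; rewrite ltnS leq_eqVlt => /predU1P[->|/f_k1[w' f_w']].
    by exists w; apply: ceval_maxr.
  by exists w'; apply: ceval_maxl.
exists (maxn (maxn k0 k1) n.+1) => /=.
rewrite (@mu_search_least _ _ n) ?leq_maxr //.
  by apply: ceval_mono f_k0; rewrite !leq_max leqnn.
move=> m /f_k1[w f_w]; exists w; apply: ceval_mono f_w.
by rewrite !leq_max leqnn orbT.
Qed.

End CevalComplete.

Lemma ceval_complete p v y : eval p v y -> exists k, ceval k p v = Some y.
Proof.
elim/program_nested_ind: p v y => [x|n l IH] v y ev; first by inversion ev.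
case: n l IH ev => [|[|[|[|[|[|n]]]]]] [|f gs] IH ev; try by inversion ev.
- by exists 0; inversion ev.
- by exists 0; inversion ev.
- by exists 0; inversion ev.
- exact: ceval_complete_comp IH ev.
- case: gs IH ev => [|g [|? ?]] IH ev; try by inversion ev.
  exact: ceval_complete_rec (IH f (or_introl erefl))
    (IH g (or_intror (or_introl erefl))) _ _ ev.
- case: gs IH ev => [|? ?] IH ev; try by inversion ev.
  exact: ceval_complete_mu (IH f (or_introl erefl)) _ _ ev.
Qed.

Lemma eval_functional p v y y' : eval p v y -> eval p v y' -> y = y'.
Proof.
move=> /ceval_complete[k p_k] /ceval_complete[k' p_k'].
by have := ceval_maxl k' p_k; rewrite (ceval_maxr k p_k') => -[].
Qed.

Definition Pzero : program := Node 0 [::].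
Definition Psucc : program := Node 1 [::].
Definition Pproj (i : nat) : program := Node 2 [:: Leaf i].
Definition Pcomp (f : program) (gs : seq program) : program := Node 3 (f :: gs).
Definition Prec (f g : program) : program := Node 4 [:: f; g].
Definition Pmu (f : program) : program := Node 5 [:: f].

Lemma eval_out p v y y' : eval p v y -> y = y' -> eval p v y'.
Proof. by move=> ev <-. Qed.

Lemma eval_Pzero v : eval Pzero v 0.
Proof. exact: ev_zero. Qed.

Lemma eval_Psucc a v : eval Psucc (a :: v) a.+1.
Proof. exact: (ev_succ (a :: v)). Qed.

Lemma eval_Pproj i v : eval (Pproj i) v (nth 0 v i).
Proof. exact: ev_proj. Qed.

Lemma eval_Pcomp1 f g v a y :
  eval g v a -> eval f [:: a] y -> eval (Pcomp f [:: g]) v y.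
Proof. by move=> g_a f_y; apply: (ev_comp (ws := [:: a])) => //; do !constructor. Qed.

Lemma eval_Pcomp2 f g1 g2 v a b y :
  eval g1 v a -> eval g2 v b -> eval f [:: a; b] y -> eval (Pcomp f [:: g1; g2]) v y.
Proof.
by move=> g1_a g2_b f_y; apply: (ev_comp (ws := [:: a; b])) => //; do !constructor.
Qed.

Lemma eval_Pcomp3 f g1 g2 g3 v a b c y :
    eval g1 v a -> eval g2 v b -> eval g3 v c -> eval f [:: a; b; c] y ->
  eval (Pcomp f [:: g1; g2; g3]) v y.
Proof.
by move=> g1_a g2_b g3_c f_y; apply: (ev_comp (ws := [:: a; b; c])) => //; do !constructor.
Qed.

Lemma eval_Prec (F G : seq nat -> nat) f g n v :
    (forall w, eval f w (F w)) -> (forall w, eval g w (G w)) ->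
  eval (Prec f g) (n :: v) (iteri n (fun i z => G [:: i, z & v]) (F v)).
Proof.
move=> f_F g_G; elim: n => [|n IHn] /=; first exact: ev_rec0.
exact: ev_recS IHn _.
Qed.
Arguments eval_Prec F G {f g n v}.

Definition Pconst (n : nat) : program := iter n (fun p => Pcomp Psucc [:: p]) Pzero.

Lemma eval_Pconst n v : eval (Pconst n) v n.
Proof.
by elim: n => [|n IHn]; [apply: eval_Pzero | apply: eval_Pcomp1 IHn (eval_Psucc _ _)].
Qed.

Definition Padd : program := Prec (Pproj 0) (Pcomp Psucc [:: Pproj 1]).

Lemma eval_Padd a b : eval Padd [:: a; b] (a + b).
Proof.
apply: eval_out.
  apply: (eval_Prec (fun w => nth 0 w 0) (fun w => (nth 0 w 1).+1)) => w.
    exact: eval_Pproj.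
  exact: eval_Pcomp1 (eval_Pproj _ _) (eval_Psucc _ _).
by elim: a => //= a ->.
Qed.

Definition Pmul : program := Prec Pzero (Pcomp Padd [:: Pproj 1; Pproj 2]).

Lemma eval_Pmul a b : eval Pmul [:: a; b] (a * b).
Proof.
apply: eval_out.
  apply: (eval_Prec (fun => 0) (fun w => nth 0 w 1 + nth 0 w 2)) => w.
    exact: eval_Pzero.
  exact: eval_Pcomp2 (eval_Pproj _ _) (eval_Pproj _ _) (eval_Padd _ _).
by elim: a => //= a ->; rewrite mulSn addnC.
Qed.

Definition Ppred : program := Prec Pzero (Pproj 0).

Lemma eval_Ppred a : eval Ppred [:: a] a.-1.
Proof.
apply: eval_out.
  exact: (eval_Prec (fun => 0) (fun w => nth 0 w 0) eval_Pzero (eval_Pproj 0)).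
by case: a.
Qed.

Definition Psub : program :=
  Pcomp (Prec (Pproj 0) (Pcomp Ppred [:: Pproj 1])) [:: Pproj 1; Pproj 0].

Lemma eval_Psub a b : eval Psub [:: a; b] (a - b).
Proof.
apply: eval_Pcomp2 (eval_Pproj 1 _) (eval_Pproj 0 _) _.
apply: eval_out.
  apply: (eval_Prec (fun w => nth 0 w 0) (fun w => (nth 0 w 1).-1)) => w.
    exact: eval_Pproj.
  exact: eval_Pcomp1 (eval_Pproj _ _) (eval_Ppred _).
by elim: b => [|b /= ->]; rewrite ?subn0 ?subnS.
Qed.

Definition Piszero : program := Prec (Pconst 1) Pzero.

Lemma eval_Piszero a : eval Piszero [:: a] (a == 0).
Proof.
apply: eval_out.
  exact: (eval_Prec (fun => 1) (fun => 0) (eval_Pconst 1) eval_Pzero).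
by case: a.
Qed.

Definition Psgn : program := Prec Pzero (Pconst 1).

Lemma eval_Psgn a : eval Psgn [:: a] (a != 0).
Proof.
apply: eval_out.
  exact: (eval_Prec (fun => 0) (fun => 1) eval_Pzero (eval_Pconst 1)).
by case: a.
Qed.

Definition Peqn : program :=
  Pcomp Piszero [:: Pcomp Padd [:: Pcomp Psub [:: Pproj 0; Pproj 1];
                                   Pcomp Psub [:: Pproj 1; Pproj 0]]].

Lemma eval_Peqn a b : eval Peqn [:: a; b] (a == b).
Proof.
apply: (eval_Pcomp1 (a := (a - b) + (b - a))).
  apply: eval_Pcomp2 _ _ (eval_Padd _ _);
    exact: eval_Pcomp2 (eval_Pproj _ _) (eval_Pproj _ _) (eval_Psub _ _).
by apply: eval_out (eval_Piszero _) _; rewrite addn_eq0 !subn_eq0 -eqn_leq.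
Qed.

Definition Peqc (g : program) (n : nat) : program := Pcomp Peqn [:: g; Pconst n].

Lemma eval_Peqc g n v a : eval g v a -> eval (Peqc g n) v (a == n).
Proof. by move=> g_a; apply: eval_Pcomp2 g_a (eval_Pconst _ _) (eval_Peqn _ _). Qed.

Definition Pselect : program :=
  Pcomp Padd [:: Pcomp Pmul [:: Pproj 0; Pproj 1];
                 Pcomp Pmul [:: Pcomp Piszero [:: Pproj 0]; Pproj 2]].

Definition Pif (g1 g2 g3 : program) : program := Pcomp Pselect [:: g1; g2; g3].

Lemma eval_Pif (b : bool) a c v g1 g2 g3 :
  eval g1 v b -> eval g2 v a -> eval g3 v c -> eval (Pif g1 g2 g3) v (if b then a else c).
Proof.
move=> g1_b g2_a g3_c; apply: eval_Pcomp3 g1_b g2_a g3_c _.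
apply: eval_out.
  apply: eval_Pcomp2 _ _ (eval_Padd _ _).
    exact: eval_Pcomp2 (eval_Pproj _ _) (eval_Pproj _ _) (eval_Pmul _ _).
  apply: eval_Pcomp2 _ (eval_Pproj _ _) (eval_Pmul _ _).
  exact: eval_Pcomp1 (eval_Pproj _ _) (eval_Piszero _).
by case: b => /=; rewrite ?mul1n ?mul0n ?addn0.
Qed.

Definition Pexp2 : program := Prec (Pconst 1) (Pcomp Padd [:: Pproj 1; Pproj 1]).

Lemma eval_Pexp2 a : eval Pexp2 [:: a] (2 ^ a).
Proof.
apply: eval_out.
  apply: (eval_Prec (fun => 1) (fun w => nth 0 w 1 + nth 0 w 1)) => w.
    exact: eval_Pconst.
  exact: eval_Pcomp2 (eval_Pproj _ _) (eval_Pproj _ _) (eval_Padd _ _).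
by elim: a => //= a ->; rewrite expnS mul2n addnn.
Qed.

(* [CodeSeq.code] is the coding of [seq nat] underlying [pickle]. *)
Definition Pcode (gs : seq program) : program :=
  foldr (fun g p =>
    Pcomp Pmul [:: Pcomp Pexp2 [:: g]; Pcomp Psucc [:: Pcomp Padd [:: p; p]]]) Pzero gs.

Lemma eval_Pcode gs v ys : evals gs v ys -> eval (Pcode gs) v (CodeSeq.code ys).
Proof.
elim=> {gs v ys} [v|g gs v y ys g_y _ IHgs]; first exact: eval_Pzero.
apply: eval_Pcomp2 (eval_Pcomp1 g_y (eval_Pexp2 _)) _ (eval_Pmul _ _).
apply: eval_out (eval_Pcomp1 (eval_Pcomp2 IHgs IHgs (eval_Padd _ _)) (eval_Psucc _ _)) _.
by rewrite addnn.
Qed.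

(** * Cantor pairing and sequence coding *)

Fixpoint tri n := if n is n'.+1 then tri n' + n'.+1 else 0.

Definition Ptri : program := Prec Pzero (Pcomp Padd [:: Pproj 1; Pcomp Psucc [:: Pproj 0]]).

Lemma eval_Ptri a : eval Ptri [:: a] (tri a).
Proof.
apply: eval_out.
  apply: (eval_Prec (fun => 0) (fun w => nth 0 w 1 + (nth 0 w 0).+1)) => w.
    exact: eval_Pzero.
  apply: eval_Pcomp2 (eval_Pproj _ _) _ (eval_Padd _ _).
  exact: eval_Pcomp1 (eval_Pproj _ _) (eval_Psucc _ _).
by elim: a => //= a ->.
Qed.

Lemma leq_tri : {homo tri : m n / m <= n}.
Proof.
by move=> m n /subnK<-; elim: (n - m) => //= k IHk; apply: leq_trans IHk (leq_addr _ _).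
Qed.

Definition cpair (m s : nat) := tri (m + s) + s.

(* [cdiag c] is the diagonal [m + s] of the Cantor enumeration containing [c]. *)
Definition cdiag (c : nat) := find (fun t => c < tri t.+1) (iota 0 c.+1).
Definition csnd (c : nat) := c - tri (cdiag c).
Definition cfst (c : nat) := cdiag c - csnd c.

Lemma cdiag_spec c : c < tri (cdiag c).+1 /\ forall t, t < cdiag c -> tri t.+1 <= c.
Proof.
have has_c : has (fun t => c < tri t.+1) (iota 0 c.+1).
  by apply/hasP; exists c; rewrite ?mem_iota //= ltn_addl.
have lt_cdiag : cdiag c < c.+1 by rewrite -(size_iota 0 c.+1) -has_find.
split; first by have := nth_find 0 has_c; rewrite nth_iota.
move=> t lt_t; have := before_find 0 lt_t.
by rewrite nth_iota ?add0n ?(ltn_trans lt_t) // => /negbT; rewrite -leqNgt.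
Qed.

Lemma tri_cdiag c : tri (cdiag c) <= c.
Proof. by have [_] := cdiag_spec c; case: (cdiag c) => [//|t]; apply. Qed.

Lemma cdiag_uniq c t : tri t <= c -> c < tri t.+1 -> cdiag c = t.
Proof.
move=> le_tc lt_ct; have [lt_c_cd le_cd] := cdiag_spec c.
apply/eqP; rewrite eqn_leq; apply/andP; split; rewrite leqNgt; apply/negP.
  by move=> /le_cd; rewrite leqNgt lt_ct.
by move=> /leq_tri; rewrite leqNgt (leq_ltn_trans le_tc lt_c_cd).
Qed.

Lemma cdiag_cpair m s : cdiag (cpair m s) = m + s.
Proof.
by apply: cdiag_uniq; rewrite /cpair ?leq_addr //= addnS ltnS leq_add2l leq_addl.
Qed.

Lemma csnd_cpair m s : csnd (cpair m s) = s.
Proof. by rewrite /csnd cdiag_cpair /cpair addKn. Qed.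

Lemma cfst_cpair m s : cfst (cpair m s) = m.
Proof. by rewrite /cfst csnd_cpair cdiag_cpair addnK. Qed.

Lemma cpair_fst_snd c : cpair (cfst c) (csnd c) = c.
Proof.
have [lt_c_cd _] := cdiag_spec c.
have le_snd : csnd c <= cdiag c by rewrite /csnd leq_subLR -ltnS -addnS.
by rewrite /cpair /cfst subnK // /csnd addnC subnK ?tri_cdiag.
Qed.

Lemma cdiag0 : cdiag 0 = 0. Proof. exact: cdiag_uniq. Qed.

Definition Pcdiag : program :=
  Pmu (Pcomp Piszero
         [:: Pcomp Psub [:: Pcomp Ptri [:: Pcomp Psucc [:: Pproj 0]]; Pproj 1]]).

Lemma eval_Pcdiag c : eval Pcdiag [:: c] (cdiag c).
Proof.
have [lt_c_cd le_cd] := cdiag_spec c.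
have eval_test t : eval (Pcomp Piszero [:: Pcomp Psub [:: Pcomp Ptri [:: Pcomp Psucc
    [:: Pproj 0]]; Pproj 1]]) [:: t; c] (tri t.+1 - c == 0).
  apply: eval_Pcomp1 _ (eval_Piszero _).
  apply: eval_Pcomp2 _ (eval_Pproj _ _) (eval_Psub _ _).
  exact: eval_Pcomp1 (eval_Pcomp1 (eval_Pproj _ _) (eval_Psucc _ _)) (eval_Ptri _).
constructor; first by apply: eval_out (eval_test _) _; rewrite subn_eq0 leqNgt lt_c_cd.
by move=> t /le_cd le_t; exists 0; apply: eval_out (eval_test _) _; rewrite subn_eq0 le_t.
Qed.

Definition Pcsnd : program := Pcomp Psub [:: Pproj 0; Pcomp Ptri [:: Pcdiag]].
Definition Pcfst : program := Pcomp Psub [:: Pcdiag; Pcsnd].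
Definition Pcpair : program := Pcomp Padd [:: Pcomp Ptri [:: Padd]; Pproj 1].

Lemma eval_Pcsnd c : eval Pcsnd [:: c] (csnd c).
Proof.
exact: eval_Pcomp2 (eval_Pproj _ _) (eval_Pcomp1 (eval_Pcdiag _) (eval_Ptri _))
  (eval_Psub _ _).
Qed.

Lemma eval_Pcfst c : eval Pcfst [:: c] (cfst c).
Proof. exact: eval_Pcomp2 (eval_Pcdiag _) (eval_Pcsnd _) (eval_Psub _ _). Qed.

Lemma eval_Pcpair m s : eval Pcpair [:: m; s] (cpair m s).
Proof.
exact: eval_Pcomp2 (eval_Pcomp1 (eval_Padd _ _) (eval_Ptri _)) (eval_Pproj _ _)
  (eval_Padd _ _).
Qed.

Fixpoint cseq (v : seq nat) : nat := if v is a :: v' then (cpair a (cseq v')).+1 else 0.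

Definition Phead : program := Pcomp Pcfst [:: Pcomp Ppred [:: Pproj 0]].
Definition Pbehead : program := Pcomp Pcsnd [:: Pcomp Ppred [:: Pproj 0]].
Definition Pcons : program := Pcomp Psucc [:: Pcpair].

Lemma eval_Phead v : eval Phead [:: cseq v] (head 0 v).
Proof.
apply: eval_Pcomp1 (eval_Pcomp1 (eval_Pproj _ _) (eval_Ppred _)) _.
apply: eval_out (eval_Pcfst _) _.
by case: v => [|a v] /=; rewrite ?cfst_cpair // /cfst /csnd cdiag0.
Qed.

Lemma eval_Pbehead v : eval Pbehead [:: cseq v] (cseq (behead v)).
Proof.
apply: eval_Pcomp1 (eval_Pcomp1 (eval_Pproj _ _) (eval_Ppred _)) _.
apply: eval_out (eval_Pcsnd _) _.
by case: v => [|a v] /=; rewrite ?csnd_cpair // /csnd cdiag0.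
Qed.

Lemma eval_Pcons a v : eval Pcons [:: a; cseq v] (cseq (a :: v)).
Proof. exact: eval_Pcomp1 (eval_Pcpair _ _) (eval_Psucc _ _). Qed.

Definition Pnth (i : nat) : program :=
  Pcomp Phead [:: iter i (fun p => Pcomp Pbehead [:: p]) (Pproj 0)].

Lemma eval_Pnth i v : eval (Pnth i) [:: cseq v] (nth 0 v i).
Proof.
have eval_drop : eval (iter i (fun p => Pcomp Pbehead [:: p]) (Pproj 0)) [:: cseq v]
    (cseq (drop i v)).
  elim: i => [|i IHi] /=; first by rewrite drop0; apply: eval_Pproj.
  apply: eval_out (eval_Pcomp1 IHi (eval_Pbehead _)) _.
  by rewrite -drop1 drop_drop.
apply: eval_out (eval_Pcomp1 eval_drop (eval_Phead _)) _.
by rewrite -nth0 nth_drop addn0.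
Qed.

(** * Step-bounded evaluation is computable *)

(* On inputs [k] and [cseq v], the compiled program [Pceval p] returns
   [oenc (ceval k p v)]. *)
Definition oenc (o : option nat) : nat := if o is Some y then y.+1 else 0.

Lemma omap_all_oenc T (h : T -> option nat) s ys :
  omap_all h s = Some ys -> ys = map (fun x => (oenc (h x)).-1) s.
Proof.
elim: s ys => [|x s IHs] ys /=; first by case=> <-.
by case: (h x) => [y|//]; case: (omap_all h s) (IHs) => [ys'|//] /(_ _ erefl)-> [<-].
Qed.

Definition Pallsome (cs : seq program) : program :=
  foldr (fun c p => Pif (Pcomp Psgn [:: c]) p Pzero) (Pconst 1) cs.

Definition Pvals (cs : seq program) : program :=
  foldr (fun c p => Pcomp Pcons [:: Pcomp Ppred [:: c]; p]) Pzero cs.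

Definition Pceval_comp (cf : program) (cgs : seq program) : program :=
  Pif (Pallsome cgs) (Pcomp cf [:: Pproj 0; Pvals cgs]) Pzero.

(* The steps below take the inputs [[:: n; acc; k; cseq v]], where [acc] is
   the encoded result of the previous [n] iterations. *)
Definition Pceval_rec_step (cg : program) : program :=
  Pif (Pcomp Psgn [:: Pproj 1])
    (Pcomp cg [:: Pproj 2; Pcomp Pcons [:: Pproj 0;
                  Pcomp Pcons [:: Pcomp Ppred [:: Pproj 1]; Pproj 3]]])
    Pzero.

Definition Pceval_rec (cf cg : program) : program :=
  Pif (Pcomp Psgn [:: Pproj 1])
    (Pcomp (Prec cf (Pceval_rec_step cg))
       [:: Pcomp Phead [:: Pproj 1]; Pproj 0; Pcomp Pbehead [:: Pproj 1]])
    Pzero.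

Definition Pceval_mu_step (cf : program) : program :=
  let r := Pcomp cf [:: Pproj 2; Pcomp Pcons [:: Pproj 0; Pproj 3]] in
  Pif (Pcomp Psgn [:: Pproj 1]) (Pproj 1)
    (Pif (Peqc r 0) (Pconst 1)
       (Pif (Peqc r 1) (Pcomp Psucc [:: Pcomp Psucc [:: Pproj 0]]) Pzero)).

Definition Pceval_mu (cf : program) : program :=
  Pcomp Ppred [:: Pcomp (Prec Pzero (Pceval_mu_step cf)) [:: Pproj 0; Pproj 0; Pproj 1]].

Fixpoint Pceval (p : program) : program :=
  match p with
  | Node 0 [::] => Pconst 1
  | Node 1 [::] => Pcomp Psucc [:: Pcomp Psucc [:: Pcomp Phead [:: Pproj 1]]]
  | Node 2 [:: Leaf i] => Pcomp Psucc [:: Pcomp (Pnth i) [:: Pproj 1]]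
  | Node 3 (f :: gs) => Pceval_comp (Pceval f) (map Pceval gs)
  | Node 4 [:: f; g] => Pceval_rec (Pceval f) (Pceval g)
  | Node 5 [:: f] => Pceval_mu (Pceval f)
  | _ => Pzero
  end.

Section CompiledArguments.
Variables (c : program -> program) (h : program -> option nat) (w : seq nat).

Lemma eval_Pallsome gs :
    (forall g, List.In g gs -> eval (c g) w (oenc (h g))) ->
  eval (Pallsome (map c gs)) w (omap_all h gs != None).
Proof.
elim: gs => [|g gs IHgs] gs_h /=; first exact: (eval_Pconst 1).
have IH := IHgs (fun g' gs_g' => gs_h g' (or_intror gs_g')).
apply: eval_out.
  exact: eval_Pif (eval_Pcomp1 (gs_h g (or_introl erefl)) (eval_Psgn _)) IH (eval_Pzero _).
by case: (h g) => [y|] /=; case: (omap_all h gs).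
Qed.

Lemma eval_Pvals gs :
    (forall g, List.In g gs -> eval (c g) w (oenc (h g))) ->
  eval (Pvals (map c gs)) w (cseq (map (fun g => (oenc (h g)).-1) gs)).
Proof.
elim: gs => [|g gs IHgs] gs_h /=; first exact: eval_Pzero.
have IH := IHgs (fun g' gs_g' => gs_h g' (or_intror gs_g')).
apply: eval_Pcomp2 _ IH (eval_Pcons _ _).
exact: eval_Pcomp1 (gs_h g (or_introl erefl)) (eval_Ppred _).
Qed.

End CompiledArguments.

Section CompiledCases.
Variables (k : nat) (cf cg : program) (F G : seq nat -> option nat).
Hypothesis cf_F : forall w, eval cf [:: k; cseq w] (oenc (F w)).
Hypothesis cg_G : forall w, eval cg [:: k; cseq w] (oenc (G w)).

Lemma eval_Pceval_comp (c : program -> program) (h : program -> option nat) gs v :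
    (forall g, List.In g gs -> eval (c g) [:: k; cseq v] (oenc (h g))) ->
  eval (Pceval_comp cf (map c gs)) [:: k; cseq v]
    (oenc (if omap_all h gs is Some ws then F ws else None)).
Proof.
move=> gs_h; apply: eval_out.
  apply: eval_Pif (eval_Pallsome gs_h) _ (eval_Pzero _).
  exact: eval_Pcomp2 (eval_Pproj 0 [:: k; cseq v]) (eval_Pvals gs_h) (cf_F _).
by case E: (omap_all h gs) => [ws|] //=; rewrite (omap_all_oenc E).
Qed.

Lemma eval_Pceval_rec v :
  eval (Pceval_rec cf cg) [:: k; cseq v]
    (oenc (if v is n :: v' then orec F G v' n else None)).
Proof.
have eval_iter n v' :
    eval (Prec cf (Pceval_rec_step cg)) [:: n; k; cseq v'] (oenc (orec F G v' n)).
  elim: n => [|n IHn] /=; first exact: ev_rec0.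
  apply: ev_recS IHn _; apply: eval_out.
    apply: eval_Pif (eval_Pcomp1 (eval_Pproj 1 _) (eval_Psgn _)) _ (eval_Pzero _).
    apply: eval_Pcomp2 _ _ (cg_G _); first exact: eval_Pproj.
    apply: eval_Pcomp2 _ _ (eval_Pcons _ _); first exact: eval_Pproj.
    apply: eval_Pcomp2 _ _ (eval_Pcons _ _); last exact: eval_Pproj.
    exact: eval_Pcomp1 (eval_Pproj _ _) (eval_Ppred _).
  by case: (orec F G v' n).
apply: eval_out.
  apply: eval_Pif (eval_Pcomp1 (eval_Pproj 1 _) (eval_Psgn _)) _ (eval_Pzero _).
  apply: eval_Pcomp3 _ _ _ (eval_iter _ _).
  - by apply: eval_Pcomp1 _ (eval_Phead _); apply: eval_Pproj.
  - exact: eval_Pproj.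
  - by apply: eval_Pcomp1 _ (eval_Pbehead _); apply: eval_Pproj.
by case: v.
Qed.

Lemma eval_Pceval_mu v :
  eval (Pceval_mu cf) [:: k; cseq v]
    (oenc (if mu_search F v k is s.+2 then Some s else None)).
Proof.
have eval_search j :
    eval (Prec Pzero (Pceval_mu_step cf)) [:: j; k; cseq v] (mu_search F v j).
  elim: j => [|j IHj]; first exact: ev_rec0 (eval_Pzero _).
  apply: ev_recS IHj _; rewrite mu_searchS.
  set s := mu_search _ v j.
  have eval_r : eval (Pcomp cf [:: Pproj 2; Pcomp Pcons [:: Pproj 0; Pproj 3]])
      [:: j, s, k & [:: cseq v]] (oenc (F (j :: v))).
    apply: eval_Pcomp2 _ _ (cf_F _); first exact: eval_Pproj.
    by apply: eval_Pcomp2 _ _ (eval_Pcons _ _); apply: eval_Pproj.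
  apply: eval_out.
    apply: eval_Pif (eval_Pcomp1 (eval_Pproj 1 _) (eval_Psgn _)) (eval_Pproj 1 _) _.
    apply: eval_Pif (eval_Peqc 0 eval_r) (eval_Pconst 1 _) _.
    apply: eval_Pif (eval_Peqc 1 eval_r) _ (eval_Pzero _).
    exact: eval_Pcomp1 (eval_Pcomp1 (eval_Pproj _ _) (eval_Psucc _ _)) (eval_Psucc _ _).
  by case: (s != 0) => //; case: (F (j :: v)) => [[|[|w]]|].
apply: eval_out.
  apply: eval_Pcomp1 _ (eval_Ppred _).
  by apply: eval_Pcomp3 _ _ _ (eval_search _); apply: eval_Pproj.
by case: (mu_search F v k) => [|[|s]].
Qed.

End CompiledCases.

Lemma eval_Pceval p k v : eval (Pceval p) [:: k; cseq v] (oenc (ceval k p v)).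
Proof.
elim/program_nested_ind: p k v => [x|n l IH] k v; first exact: eval_Pzero.
case: n l IH => [|[|[|[|[|[|n]]]]]] [|f gs] IH; try exact: eval_Pzero.
- exact: eval_Pconst.
- apply: eval_Pcomp1 _ (eval_Psucc _ _); apply: eval_Pcomp1 _ (eval_Psucc _ _).
  by apply: eval_Pcomp1 _ (eval_Phead _); apply: eval_Pproj.
- case: f gs {IH} => [i|? ?] [|? ?]; try exact: eval_Pzero.
  apply: eval_Pcomp1 _ (eval_Psucc _ _).
  by apply: eval_Pcomp1 _ (eval_Pnth _ _); apply: eval_Pproj.
- exact: (eval_Pceval_comp (F := ceval k f) (c := Pceval) (h := fun g => ceval k g v)
    (IH f (or_introl erefl) k) (fun g gs_g => IH g (or_intror gs_g) k v)).
- case: gs IH => [|g [|? ?]] IH; try exact: eval_Pzero.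
  exact: (eval_Pceval_rec (F := ceval k f) (G := ceval k g)
    (IH f (or_introl erefl) k) (IH g (or_intror (or_introl erefl)) k) v).
- case: gs IH => [|? ?] IH; try exact: eval_Pzero.
  exact: (eval_Pceval_mu (F := ceval k f) (IH f (or_introl erefl) k) v).
Qed.

(** * A family of computable strong bimonoids *)

Section Clip.
Variable r : nat -> bool.

Definition clip (v : nat) : nat := find (fun j => (j == v) || r j) (iota 0 v.+1).

Lemma clip_spec v : [/\ clip v <= v, (clip v == v) || r (clip v) &
  forall i, i < clip v -> ~~ r i /\ i != v].
Proof.
have has_v : has (fun j => (j == v) || r j) (iota 0 v.+1).
  by apply/hasP; exists v; rewrite ?mem_iota ?add0n ?ltnSn ?eqxx.
have lt_clip : clip v < v.+1 by rewrite -(size_iota 0 v.+1) -has_find.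
split=> //; first by have := nth_find 0 has_v; rewrite nth_iota.
move=> i lt_i; have := before_find 0 lt_i.
by rewrite nth_iota ?add0n ?(ltn_trans lt_i) //; case: (i == v); case: (r i).
Qed.

Lemma clip_uniq v j : j <= v -> (j == v) || r j -> (forall i, i < j -> ~~ r i) ->
  clip v = j.
Proof.
move=> le_jv hit_j miss_lt_j; have [le_cv hit_c miss_lt_c] := clip_spec v.
apply/eqP; rewrite eqn_leq; apply/andP; split; rewrite leqNgt; apply/negP.
  by move=> /miss_lt_c[/negPf r_j /negPf j_v]; rewrite r_j j_v in hit_j.
move=> /[dup] lt_cj /miss_lt_j /negPf r_c; rewrite r_c orbF in hit_c.
by move: (leq_trans lt_cj le_jv); rewrite (eqP hit_c) ltnn.
Qed.

Lemma clip_id v : (forall j, ~~ r j) -> clip v = v.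
Proof. by move=> miss; apply: clip_uniq; rewrite ?eqxx. Qed.

Lemma clip_le v j : r j -> clip v <= j.
Proof.
move=> r_j; have [_ _ miss_lt_c] := clip_spec v.
by rewrite leqNgt; apply/negP => /miss_lt_c[]; rewrite r_j.
Qed.

Lemma clipDl a b : clip (clip a + b) = clip (a + b).
Proof.
have [le_ca hit_c miss_lt_c] := clip_spec a.
have [->//|ne_ca] := eqVneq (clip a) a.
have r_c : r (clip a) by rewrite (negPf ne_ca) in hit_c.
have miss_c i : i < clip a -> ~~ r i by move=> /miss_lt_c[].
rewrite (@clip_uniq (clip a + b) (clip a)) ?leq_addr ?r_c ?orbT //.
by rewrite (@clip_uniq (a + b) (clip a)) ?r_c ?orbT ?(leq_trans le_ca (leq_addr _ _)).
Qed.

End Clip.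

Definition Pclip (pr : program) : program :=
  Pmu (Pcomp Pmul [:: Pcomp Piszero [:: Pcomp Peqn [:: Pproj 0; Pproj 1]];
                      Pcomp Piszero [:: Pcomp pr [:: Pproj 0; Pproj 2]]]).

Lemma eval_Pclip (r : nat -> bool) pr m v :
  (forall j, eval pr [:: j; m] (r j)) -> eval (Pclip pr) [:: v; m] (clip r v).
Proof.
move=> pr_r; have [_ hit_c miss_lt_c] := clip_spec r v.
have eval_test j : eval (Pcomp Pmul [:: Pcomp Piszero [:: Pcomp Peqn [:: Pproj 0; Pproj 1]];
    Pcomp Piszero [:: Pcomp pr [:: Pproj 0; Pproj 2]]]) [:: j; v; m] (~~ ((j == v) || r j)).
  apply: eval_out.
    apply: eval_Pcomp2 _ _ (eval_Pmul _ _).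
      by apply: eval_Pcomp1 _ (eval_Piszero _); apply: eval_Pcomp2 _ _ (eval_Peqn _ _);
        apply: eval_Pproj.
    by apply: eval_Pcomp1 _ (eval_Piszero _); apply: eval_Pcomp2 _ _ (pr_r _);
      apply: eval_Pproj.
  by case: (j == v); case: (r j).
constructor; first by apply: eval_out (eval_test _) _; rewrite hit_c.
move=> i /miss_lt_c[r_i i_v]; exists 0; apply: eval_out (eval_test i) _.
by rewrite (negPf r_i) (negPf i_v).
Qed.

Definition elt (m s : nat) : nat := (cpair m s).+2.

Variant elt_spec : nat -> Type :=
| EltZero : elt_spec 0
| EltOne : elt_spec 1
| EltTagged m s : elt_spec (elt m s).

Lemma eltP x : elt_spec x.
Proof.
case: x => [|[|x]]; [exact: EltZero | exact: EltOne |].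
by rewrite -[x]cpair_fst_snd; apply: EltTagged.
Qed.

Lemma leq_elt m s : s <= elt m s.
Proof. exact: leq_trans (leq_addl _ _) (ltnW (leqnSn _)). Qed.

Definition mulB (x y : nat) : nat :=
  if x == 0 then 0 else if y == 0 then 0 else
  if x == 1 then y else if y == 1 then x else 0.

Lemma mulBA x y z : mulB (mulB x y) z = mulB x (mulB y z).
Proof. by case: x => [|[|x]]; case: y => [|[|y]]; case: z => [|[|z]]. Qed.

Lemma mul1B x : mulB 1 x = x. Proof. by case: x => [|[]]. Qed.
Lemma mulB1 x : mulB x 1 = x. Proof. by case: x => [|[]]. Qed.
Lemma mul0B x : mulB 0 x = 0. Proof. by []. Qed.
Lemma mulB0 x : mulB x 0 = 0. Proof. by case: x => [|[]]. Qed.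

Lemma nsumS add z n b : nsum add z n.+1 b = add (nsum add z n b) b.
Proof. by []. Qed.

Lemma eq_finite_order add add' z b : add =2 add' ->
  finite_order add z b -> finite_order add' z b.
Proof.
move=> eq_add [s fin_s]; exists s => _ [n ->]; apply: fin_s; exists n.
by elim: n => //= n ->; rewrite eq_add.
Qed.

Section AddB.
Variable r : nat -> nat -> bool.

(* Besides the units [0] and [1], the elements are counters [elt m s] tagged
   with [m]; counters with equal tags add up, clipped at the first hit of
   [r m], and all other sums are [1]. *)
Definition addB (x y : nat) : nat :=
  if x == 0 then y else if y == 0 then x else
  if x == 1 then 1 else if y == 1 then 1 else
  let m := cfst (x - 2) in
  if m == cfst (y - 2) then elt m (clip (r m) (csnd (x - 2) + csnd (y - 2))) else 1.

Lemma add0B y : addB 0 y = y. Proof. by []. Qed.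
Lemma addB0 x : addB x 0 = x. Proof. by case: x. Qed.
Lemma add1B_elt m s : addB 1 (elt m s) = 1. Proof. by []. Qed.
Lemma addB1_elt m s : addB (elt m s) 1 = 1. Proof. by []. Qed.

Lemma addB_elt m s m' s' :
  addB (elt m s) (elt m' s') = if m == m' then elt m (clip (r m) (s + s')) else 1.
Proof. by rewrite /addB /= !subn2 /= !cfst_cpair !csnd_cpair. Qed.

Lemma addBC x y : addB x y = addB y x.
Proof.
case: (eltP x) => [||m s]; case: (eltP y) => [||m' s'];
  rewrite ?add0B ?addB0 ?add1B_elt ?addB1_elt ?addB_elt //.
by case: eqVneq => [<-|//]; rewrite addnC.
Qed.

Lemma addBA x y z : addB (addB x y) z = addB x (addB y z).
Proof.
case: (eltP x) => [||m1 s1]; case: (eltP y) => [||m2 s2]; case: (eltP z) => [||m3 s3];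
  rewrite ?add0B ?addB0 ?add1B_elt ?addB1_elt ?addB_elt //.
- by case: (m2 == m3); rewrite ?add1B_elt.
- by case: (m1 == m2); rewrite ?addB1_elt.
case: (eqVneq m1 m2) => [<-|ne12]; case: (eqVneq m1 m3) => [<-|ne13];
  rewrite ?addB_elt ?eqxx ?add1B_elt ?addB1_elt.
- by rewrite clipDl [s1 + clip _ _]addnC clipDl [s2 + s3 + s1]addnC addnA.
- by rewrite (negPf ne13).
- by rewrite eq_sym (negPf ne12) addB1_elt.
- by case: (m2 == m3); rewrite ?addB1_elt // addB_elt (negPf ne12).
Qed.

Lemma strong_bimonoid_B (P : nat -> Prop) :
  (forall x, P x) -> strong_bimonoid P addB mulB 0 1.
Proof.
move=> PT; split; first by split.
split; split=> //.
- by move=> x y z _ _ _; apply: addBA.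
- by move=> x y _ _; apply: addBC.
- by move=> x _; split; [apply: add0B | apply: addB0].
- by move=> x y z _ _ _; apply: mulBA.
- by move=> x _; split; [apply: mul1B | apply: mulB1].
- by move=> x _; split; [apply: mul0B | apply: mulB0].
Qed.

Lemma nsum_elt_bounded m j : r m j ->
  forall n, exists2 t, nsum addB 0 n.+1 (elt m 1) = elt m t & t <= maxn 1 j.
Proof.
move=> r_j; elim=> [|n [t sum_n le_t]]; first by exists 1; rewrite ?leq_maxl.
exists (clip (r m) (t + 1)); first by rewrite nsumS sum_n addB_elt eqxx.
exact: leq_trans (clip_le _ r_j) (leq_maxr _ _).
Qed.

Lemma nsum_elt_free m : (forall j, ~~ r m j) ->
  forall n, nsum addB 0 n.+1 (elt m 1) = elt m n.+1.
Proof.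
move=> miss; elim=> [//|n IHn].
by rewrite nsumS IHn addB_elt eqxx clip_id // addn1.
Qed.

Lemma finite_order_elt m j : r m j -> finite_order addB 0 (elt m 1).
Proof.
move=> r_j; exists (0 :: [seq elt m t | t <- iota 0 (maxn 1 j).+1]) => _ [[|n] ->].
  exact: mem_head.
have [t -> le_t] := nsum_elt_bounded r_j n.
by rewrite inE map_f ?orbT // mem_iota ltnS le_t.
Qed.

Lemma finite_order_elt_hit m :
  finite_order addB 0 (elt m 1) -> ~ forall j, ~~ r m j.
Proof.
move=> [s fin_s] miss; set n := \max_(x <- s) x.
have /fin_s s_e : exists k, elt m n.+1 = nsum addB 0 k (elt m 1).
  by exists n.+1; rewrite nsum_elt_free.
have le_e_n : elt m n.+1 <= n := leq_bigmax_seq _ s_e isT.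
by have := leq_trans (leq_elt m n.+1) le_e_n; rewrite ltnn.
Qed.

End AddB.

Definition PmulB : program :=
  Pif (Peqc (Pproj 0) 0) Pzero
 (Pif (Peqc (Pproj 1) 0) Pzero
 (Pif (Peqc (Pproj 0) 1) (Pproj 1)
 (Pif (Peqc (Pproj 1) 1) (Pproj 0) Pzero))).

Lemma eval_PmulB x y : eval PmulB [:: x; y] (mulB x y).
Proof.
by do ![apply: eval_Pif | apply: eval_Peqc | apply: eval_Pproj | apply: eval_Pzero].
Qed.

Definition Pelt (gm gs : program) : program :=
  Pcomp Psucc [:: Pcomp Psucc [:: Pcomp Pcpair [:: gm; gs]]].

Lemma eval_Pelt gm gs v m s : eval gm v m -> eval gs v s -> eval (Pelt gm gs) v (elt m s).
Proof.
move=> gm_m gs_s; apply: eval_Pcomp1 _ (eval_Psucc _ _).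
exact: eval_Pcomp1 (eval_Pcomp2 gm_m gs_s (eval_Pcpair _ _)) (eval_Psucc _ _).
Qed.

Definition Ptag (g : program) : program := Pcomp Pcfst [:: Pcomp Psub [:: g; Pconst 2]].
Definition Pcounter (g : program) : program := Pcomp Pcsnd [:: Pcomp Psub [:: g; Pconst 2]].

Lemma eval_Ptag g v x : eval g v x -> eval (Ptag g) v (cfst (x - 2)).
Proof.
move=> g_x; apply: eval_Pcomp1 _ (eval_Pcfst _).
exact: eval_Pcomp2 g_x (eval_Pconst _ _) (eval_Psub _ _).
Qed.

Lemma eval_Pcounter g v x : eval g v x -> eval (Pcounter g) v (csnd (x - 2)).
Proof.
move=> g_x; apply: eval_Pcomp1 _ (eval_Pcsnd _).
exact: eval_Pcomp2 g_x (eval_Pconst _ _) (eval_Psub _ _).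
Qed.

Definition PaddB (pr : program) : program :=
  Pif (Peqc (Pproj 0) 0) (Pproj 1)
 (Pif (Peqc (Pproj 1) 0) (Pproj 0)
 (Pif (Peqc (Pproj 0) 1) (Pconst 1)
 (Pif (Peqc (Pproj 1) 1) (Pconst 1)
 (Pif (Pcomp Peqn [:: Ptag (Pproj 0); Ptag (Pproj 1)])
      (Pelt (Ptag (Pproj 0))
         (Pcomp (Pclip pr) [:: Pcomp Padd [:: Pcounter (Pproj 0); Pcounter (Pproj 1)];
                              Ptag (Pproj 0)]))
      (Pconst 1))))).

Lemma eval_PaddB (r : nat -> nat -> bool) pr x y :
    (forall m j, eval pr [:: j; m] (r m j)) ->
  eval (PaddB pr) [:: x; y] (addB r x y).
Proof.
move=> pr_r; have tag_x := eval_Ptag (eval_Pproj 0 [:: x; y]).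
have tag_y := eval_Ptag (eval_Pproj 1 [:: x; y]).
do 4![apply: eval_Pif; [by apply: eval_Peqc; apply: eval_Pproj
                      | first [exact: eval_Pproj | exact: eval_Pconst] |]].
apply: eval_Pif (eval_Pcomp2 tag_x tag_y (eval_Peqn _ _)) _ (eval_Pconst _ _).
apply: eval_Pelt tag_x (eval_Pcomp2 _ tag_x (eval_Pclip _ (pr_r _))).
exact: eval_Pcomp2 (eval_Pcounter (eval_Pproj 0 [:: x; y]))
  (eval_Pcounter (eval_Pproj 1 [:: x; y])) (eval_Padd _ _).
Qed.

(** * The diagonal wta *)

(* [wta_code m] is the code of the wta whose data other than the root weights
   has code [m] and whose single root weight is [elt m 1]; see [pickle_wta]. *)
Definition wta_code (m : nat) : nat := CodeSeq.code [:: m; CodeSeq.code [:: elt m 1]].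

Definition Pwta_code : program := Pcode [:: Pproj 0; Pcode [:: Pelt (Pproj 0) (Pconst 1)]].

Lemma eval_Pwta_code m : eval Pwta_code [:: m] (wta_code m).
Proof.
have elt_m : evals [:: Pelt (Pproj 0) (Pconst 1)] [:: m] [:: elt m 1].
  by do !constructor; apply: eval_Pelt (eval_Pproj 0 _) (eval_Pconst _ _).
by apply: eval_Pcode; do !constructor; apply: eval_Pcode.
Qed.

Section Diagonal.
Variable d : program.

Definition rejects_within (m j : nat) : bool := ceval j d [:: wta_code m] == Some 0.

Definition Prejects_within : program :=
  Peqc (Pcomp (Pceval d)
          [:: Pproj 0; Pcomp Pcons [:: Pcomp Pwta_code [:: Pproj 1]; Pzero]]) 1.

Lemma eval_Prejects_within m j : eval Prejects_within [:: j; m] (rejects_within m j).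
Proof.
apply: eval_out.
  apply: eval_Peqc; apply: eval_Pcomp2 _ _ (eval_Pceval d j [:: wta_code m]).
    exact: eval_Pproj.
  apply: eval_Pcomp2 _ (eval_Pzero _) (eval_Pcons _ [::]).
  exact: eval_Pcomp1 (eval_Pproj 1 [:: j; m]) (eval_Pwta_code _).
by rewrite /rejects_within; case: (ceval j d _) => [[|w]|].
Qed.

Local Notation addBd := (addB rejects_within).

Definition wta_data : seq nat * nat * (program * program * program) * (nat * nat)
    * seq (nat * seq nat * nat * nat) :=
  ([:: 0], 1, (Pconst 1, PaddB Prejects_within, PmulB), (0, 1), [:: (0, [::], 0, 1)]).
Definition wta_tag : nat := pickle wta_data.
Definition wta : instance := (wta_data, [:: elt wta_tag 1]).

Lemma pickle_wta : pickle wta = wta_code wta_tag.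
Proof. reflexivity. Qed.

Lemma inB_wta x : inB wta x.
Proof. exact: eval_Pconst. Qed.

Lemma valid_wta : valid_instance wta.
Proof.
split=> //.
- by move=> x; right; apply: inB_wta.
- exists addBd, mulB; split.
  + by move=> x y _ _; apply: eval_PaddB eval_Prejects_within.
  + by move=> x y _ _; apply: eval_PmulB.
  + by apply: strong_bimonoid_B inB_wta.
- split=> //; split; last by split=> // q _; apply: inB_wta.
  by move=> e; rewrite inE => /eqP->; split=> //; apply: inB_wta.
- by move=> s qs _ [|q] [|q'].
Qed.

Lemma inH_wta mul b : mul =2 mulB -> inH wta mul b -> b = 1.
Proof.
move=> eq_mul; elim=> [{}b [s [qs [q []]]]|a {}b _ -> _ ->]; last by rewrite eq_mul.
rewrite /good_args /is_state /is_sym /rank /=.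
by case: s => [|//]; case: qs => [|//]; case: q.
Qed.

Lemma rejection_has_fop j : rejects_within wta_tag j -> has_fop wta.
Proof.
move=> rej add mul add_ok mul_ok.
have eq_add : add =2 addBd.
  move=> x y; apply: eval_functional (add_ok x y (inB_wta x) (inB_wta y)) _.
  exact: eval_PaddB eval_Prejects_within.
have eq_mul : mul =2 mulB.
  move=> x y; apply: eval_functional (mul_ok x y (inB_wta x) (inB_wta y)) _.
  exact: eval_PmulB.
split; first by exists [:: 1] => x /(inH_wta eq_mul)->.
move=> a c /(inH_wta eq_mul)-> [q [state_q ->]]; case: q state_q => [|//] _.
rewrite eq_mul mul1B; apply: eq_finite_order (fun x y => esym (eq_add x y)) _.
exact: finite_order_elt rej.
Qed.

Lemma no_rejection_no_fop : (forall j, ~~ rejects_within wta_tag j) -> ~ has_fop wta.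
Proof.
move=> miss fop.
have [_ order_ok] := fop addBd mulB
  (fun x y _ _ => eval_PaddB x y eval_Prejects_within) (fun x y _ _ => eval_PmulB x y).
have one_in_H : inH wta mulB 1 by apply: inH_base; exists 0, [::], 0.
have root_weight : exists q, is_state wta q /\ elt wta_tag 1 = F wta q by exists 0.
move: (order_ok 1 _ one_in_H root_weight).
by rewrite mul1B => /finite_order_elt_hit/(_ miss).
Qed.

End Diagonal.

Theorem theorem8p9 :
  ~ exists d : program,
      forall I : instance, valid_instance I ->
        (has_fop I -> eval d [:: pickle I] 1) /\
        (~ has_fop I -> eval d [:: pickle I] 0).
Proof.
move=> [d decides].
have [accept reject] := decides (wta d) (valid_wta d).
rewrite pickle_wta in accept reject.
have never_rejects j : ~~ rejects_within d (wta_tag d) j.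
  apply/negP => rejects_j; have rejected := ceval_sound (eqP rejects_j).
  by have := eval_functional rejected (accept (rejection_has_fop rejects_j)).
have [k rejected_k] := ceval_complete (reject (no_rejection_no_fop never_rejects)).
by have := never_rejects k; rewrite /rejects_within rejected_k.
Qed.
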